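(* There exist finite alphabets $\Sigma,\Gamma$, a function $f:\Sigma^*\to\Gamma^*$, integers $i,j>0$ and a tier $\tau$ on $\Sigma\cup\Gamma$ such that $f$ is $i,j$-TIOSL on tier $\tau$, but for every $k>0$ and every tier $\upsilon$ on $\Sigma\times\Gamma^*$, $f$ is not $k$-TSSL on tier $\upsilon$.
   Context: Strings: $\lambda$ is the empty string; $\rtimes$ is a boundary symbol not in any alphabet. For $m\ge0$, $\mathrm{suff}^m(x)$ is the string of the last $m$ symbols of $\rtimes^mx$. $\mathrm{lcp}(A)$ is the longest common prefix of a set of strings $A$. For $f:\Sigma^*\to\Gamma^*$: $f^{\gets}(x):=\mathrm{lcp}(\{f(xy)\mid y\in\Sigma^*\})$, and $f^{\to}_x$ is defined by $f(xy)=f^{\gets}(x)f^{\to}_x(y)$. A tier on a (possibly infinite) alphabet $A$ is a homomorphism $\tau:A^*\to A^*$ with $\tau(a)\in\{a,\lambda\}$ for each $a\in A$. Given $i,j>0$ and a tier $\tau$ on $\Sigma\cup\Gamma$, $f$ is $i,j$-TIOSL on $\tau$ if for all $w,x\in\Sigma^*$, $\mathrm{suff}^{i-1}(\tau(w))=\mathrm{suff}^{i-1}(\tau(x))$ and $\mathrm{suff}^{j-1}(\tau(f^{\gets}(w)))=\mathrm{suff}^{j-1}(\tau(f^{\gets}(x)))$ imply $f^{\to}_w=f^{\to}_x$. Actions of $f$: $\mathbb{A}_f:=\{\langle x,y\rangle\in\Sigma\times\Gamma^*\mid\exists z\in\Sigma^*.\ f^{\gets}(zx)=f^{\gets}(z)y\}$,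 written $x:y$. The run $f^{\Leftarrow}(x)$: if $|x|\le1$, $f^{\Leftarrow}(x):=x:f^{\gets}(x)$; if $x=yz$ with $|y|\ge1$, $|z|=1$, then $f^{\Leftarrow}(x):=f^{\Leftarrow}(y)(z:w)$ where $f^{\gets}(x)=f^{\gets}(y)w$. For a tier $\upsilon$ on $\Sigma\times\Gamma^*$ and $k>0$, $f$ is $k$-TSSL on $\upsilon$ if for all $x,y\in\Sigma^*$, $\mathrm{suff}^{k-1}(\upsilon(f^{\Leftarrow}(x)))=\mathrm{suff}^{k-1}(\upsilon(f^{\Leftarrow}(y)))$ implies $f^{\to}_x=f^{\to}_y$. *)

From mathcomp Require Import all_boot.
From Stdlib Require Import ClassicalEpsilon.

Set Implicit Arguments. Unset Strict Implicit. Unset Printing Implicit Defensive.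

(* suff^m(x): last m symbols of (boundary)^m x; boundary symbol = None. *)
Definition suff (A : Type) (m : nat) (x : seq A) : seq (option A) :=
  drop (size x) (nseq m None ++ map Some x).

Definition is_lcp (A : eqType) (P : seq A -> Prop) (p : seq A) : Prop :=
  (forall s, P s -> prefix p s) /\
  (forall q, (forall s, P s -> prefix q s) -> prefix q p).

Definition lcp (A : eqType) (P : seq A -> Prop) : seq A :=
  epsilon (inhabits [::]) (is_lcp P).

Section Functions.
Variables (Sigma Gamma : finType) (f : seq Sigma -> seq Gamma).

Definition fgets (x : seq Sigma) : seq Gamma :=
  lcp (fun s => exists y, s = f (x ++ y)).

(* f^{->}_x, defined by f(xy) = f^{<-}(x) f^{->}_x(y). *)
Definition fto (x : seq Sigma) (y : seq Sigma) : seq Gamma :=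
  drop (size (fgets x)) (f (x ++ y)).

Definition tier (A : Type) (t : A -> bool) (s : seq A) : seq A := filter t s.

(* The alphabet Sigma u Gamma is modelled as the disjoint sum Sigma + Gamma. *)
Definition TIOSL (i j : nat) (tau : Sigma + Gamma -> bool) : Prop :=
  forall w x : seq Sigma,
    suff i.-1 (tier tau (map inl w)) = suff i.-1 (tier tau (map inl x)) ->
    suff j.-1 (tier tau (map inr (fgets w))) =
      suff j.-1 (tier tau (map inr (fgets x))) ->
    fto w =1 fto x.

(* output of the i-th action of the run on x *)
Definition run_out (x : seq Sigma) (n : nat) : seq Gamma :=
  if n == 0 then fgets (take 1 x)
  else drop (size (fgets (take n x))) (fgets (take n.+1 x)).

(* f^{<=}(x): the run of f on x, a string over Sigma x Gamma^*.
   f^{<=}(a) = a : f^{<-}(a), f^{<=}(yz) = f^{<=}(y) (z : w) with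
   f^{<-}(yz) = f^{<-}(y) w.  The run on the empty input is the empty string. *)
Definition run (x : seq Sigma) : seq (Sigma * seq Gamma) :=
  map (fun p => (p.1, run_out x p.2)) (zip x (iota 0 (size x))).

Definition TSSL (k : nat) (ups : Sigma * seq Gamma -> bool) : Prop :=
  forall x y : seq Sigma,
    suff k.-1 (tier ups (run x)) = suff k.-1 (tier ups (run y)) ->
    fto x =1 fto y.

End Functions.

(* Over {0,1} (0 = false, 1 = true), let f (called [flag] below) write 1 on
   reading the first 0 and, once the input ends, a final 0 if its last letter
   is 1.  The final 0 can never be committed before the input ends, so f^{<-}(w)
   is [1] or [] according as w contains a 0, and f^{->}_w is determined by that
   bit (the last output symbol) and the last input letter: f is 2,2-TIOSL on
   the full tier.  In the run, however, every action after the first one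
   outputs nothing, so the last input letter is lost.  If the tier keeps the
   action (1:[]), the runs on 01^k and 1^k end in the same k tier symbols; if it
   drops it, the runs on 01 and 0 have the same tier image.  In both cases the
   pending outputs differ. *)

From mathcomp Require Import all_boot.
From Stdlib Require Import ClassicalEpsilon.

Lemma prefix_anti (T : eqType) : antisymmetric (@prefix T).
Proof.
move=> s t /andP[st ts]; have /eqP size_st : size s == size t.
  by rewrite eqn_leq !size_prefix.
by move: st; rewrite prefixE size_st take_size => /eqP.
Qed.

Lemma lcp_unique (A : eqType) (P : seq A -> Prop) (p : seq A) :
  is_lcp P p -> lcp P = p.
Proof.
move=> lcp_p.
have [lcp_lb lcp_glb] := epsilon_spec (inhabits [::]) _ (ex_intro _ p lcp_p).
by apply: prefix_anti; rewrite (lcp_glb _ lcp_p.1) (lcp_p.2 _ lcp_lb).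
Qed.

Section Runs.
Variables (Sigma Gamma : finType) (f : seq Sigma -> seq Gamma).

Lemma fgets_attained (x : seq Sigma) (p : seq Gamma) :
  (forall y, prefix p (f (x ++ y))) -> (exists y, f (x ++ y) = p) ->
  fgets f x = p.
Proof.
move=> p_lb [y0 fy0]; apply: lcp_unique; split=> [_ [y ->] // | q q_lb].
by rewrite -fy0; apply: q_lb; exists y0.
Qed.

Lemma map_run_out_zip_iota (h : nat -> seq Gamma) (s : seq Sigma) m :
  (forall n, m <= n -> h n = [::]) ->
  map (fun p => (p.1, h p.2)) (zip s (iota m (size s))) =
    [seq (a, [::]) | a <- s].
Proof.
elim: s m => //= a s IHs m h0; rewrite h0 // IHs // => n /ltnW; exact: h0.
Qed.

Lemma run_fgets_stable (a : Sigma) (s : seq Sigma) :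
  (forall n, fgets f (take n.+1 (a :: s)) = fgets f [:: a]) ->
  run f (a :: s) = (a, fgets f [:: a]) :: [seq (b, [::]) | b <- s].
Proof.
move=> stable; rewrite /run /= -/(iota 1 (size s)).
congr cons; last apply: map_run_out_zip_iota => -[|n] // _.
  by rewrite /run_out /= take0.
by rewrite /run_out !stable drop_size.
Qed.

End Runs.

Lemma suff_drop {A : Type} {m : nat} {s : seq A} :
  m <= size s -> suff m s = map Some (drop (size s - m) s).
Proof.
by move=> m_le; rewrite /suff drop_cat size_nseq ltnNge m_le map_drop.
Qed.

Lemma suff_cat {A : Type} (m : nat) (p s : seq A) :
  m <= size s -> suff m (p ++ s) = suff m s.
Proof.
move=> m_le; have m_le' : m <= size (p ++ s).
  by rewrite size_cat (leq_trans m_le) ?leq_addl.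
rewrite (suff_drop m_le') (suff_drop m_le) drop_cat size_cat -addnBA //.
by rewrite ltnNge leq_addr addKn.
Qed.

Lemma suff1_last_eq {A : Type} (x0 : A) (s t : seq A) :
  suff 1 s = suff 1 t -> last x0 s = last x0 t.
Proof.
have suff1_rcons u a : suff 1 (rcons u a) = [:: Some a].
  by rewrite suff_drop size_rcons // subn1 -cats1 drop_size_cat.
case/lastP: s => [|s a]; case/lastP: t => [|t b] //;
  by rewrite ?suff1_rcons ?last_rcons // => -[->].
Qed.

Definition flag (w : seq bool) : seq bool :=
  if false \in w then true :: (if last false w then [:: false] else [::])
  else [::].

Lemma fgets_flag (w : seq bool) :
  fgets flag w = if false \in w then [:: true] else [::].
Proof.
apply: fgets_attained => [y | ]; rewrite /flag.
  by rewrite mem_cat; case: ifP => //= _; case: ifP.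
case: ifP => w0; last by exists [::]; rewrite cats0 w0.
by exists [:: false]; rewrite mem_cat w0 last_cat.
Qed.

Lemma fto_flag (w v : seq bool) :
  fto flag w v = drop (false \in w) (flag (w ++ v)).
Proof. by rewrite /fto fgets_flag; case: (_ \in _). Qed.

Lemma flag_TIOSL : TIOSL flag 2 2 (fun _ => true).
Proof.
move=> w x; rewrite /tier !filter_predT => /(suff1_last_eq (inl false)).
rewrite !(last_map inl) => -[last_wx] /(suff1_last_eq (inr false)).
rewrite !(last_map inr) !fgets_flag => -[zero_wx].
have {}zero_wx : (false \in w) = (false \in x).
  by move: zero_wx; do 2 case: (_ \in _).
by move=> v; rewrite !fto_flag /flag !mem_cat !last_cat zero_wx last_wx.
Qed.

Lemma run_flag_false (s : seq bool) :
  run flag (false :: s) = (false, [:: true]) :: [seq (b, [::]) | b <- s].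
Proof.
by rewrite run_fgets_stable ?fgets_flag // => n; rewrite !fgets_flag inE.
Qed.

Lemma run_flag_ones (k : nat) : run flag (nseq k true) = nseq k (true, [::]).
Proof.
case: k => // k; rewrite run_fgets_stable ?fgets_flag ?map_nseq // => n.
by rewrite !fgets_flag; case: ifP => // /mem_take; rewrite inE mem_nseq andbF.
Qed.

Lemma flag_not_TSSL (k : nat) (ups : bool * seq bool -> bool) :
  0 < k -> ~ TSSL flag k ups.
Proof.
move=> k_gt0 tssl; set x := false :: nseq k true.
have fto_x : fto flag x [::] = [:: false].
  rewrite fto_flag cats0 /flag inE /=; case: k k_gt0 {x tssl} => // k _.
  by elim: k.
have tier_x : tier ups (run flag x) =
  tier ups [:: (false, [:: true])] ++ tier ups (nseq k (true, [::])).
  by rewrite run_flag_false map_nseq /tier -filter_cat.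
case keep1: (ups (true, [::])).
- have := tssl x (nseq k true).
  rewrite tier_x run_flag_ones /tier filter_nseq keep1 mul1n.
  rewrite suff_cat ?size_nseq ?leq_pred // => /(_ erefl [::]).
  by rewrite fto_x fto_flag cats0 /flag mem_nseq andbF.
- have := tssl x [:: false].
  rewrite tier_x run_flag_false /tier filter_nseq keep1 mul0n cats0.
  by move=> /(_ erefl [::]); rewrite fto_x fto_flag.
Qed.

Theorem proposition18 :
  exists (Sigma Gamma : finType) (f : seq Sigma -> seq Gamma) (i j : nat)
         (tau : Sigma + Gamma -> bool),
    0 < #|Sigma| /\ 0 < #|Gamma| /\ 0 < i /\ 0 < j /\
    TIOSL f i j tau /\
    (forall (k : nat) (ups : Sigma * seq Gamma -> bool),
        0 < k -> ~ TSSL f k ups).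
Proof.
exists bool, bool, flag, 2, 2, (fun _ => true).
rewrite card_bool; do !split; [exact: flag_TIOSL | exact: flag_not_TSSL].
Qed.
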